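(* Under the standing assumptions of the context, there are constants $0<\tilde c_0\le1\le\tilde c$ such that for every $\ell\ge1$ and every $n\ge2$ with $\mathcal K_\ell\cap[1,n)^2\ne\emptyset$, \[ \frac{\tilde c_0}{\ell^2}\le\delta_\ell(n)\le\frac{\tilde c}{\ell^2},\qquad\text{where }\ \delta_\ell(n)=\frac{\#(\mathcal K_\ell\cap[1,n)^2)}{n^2-n}. \]
   Context: Standing assumptions: $A=\{0,1\}$, $\Sigma=A^{\mathbb N_0}$ with metric $\rho(y,z)=2^{-\min\{i\ge0:\,y_i\ne z_i\}}$ ($y\ne z$) and shift $\sigma$. $\zeta:A\to A^*$ is a binary substitution of constant length $q\ge2$ ($|\zeta(0)|=|\zeta(1)|=q$, extended to words and sequences by concatenation), which is primitive (for some $k$, every letter occurs in $\zeta^k(a)$ for all $a$), aperiodic (the subshift $X_\zeta$ of all sequences whose finite subwords are subwords of some $\zeta^k(a)$ contains a non-$\sigma$-periodic sequence), and such that $\zeta(0)$ starts with $0$; $x=\lim_k\zeta^k(0)$ is the unique fixed point of $\zeta$ starting with $0$. Recurrence plot $R(x,\infty,1/2)$: the matrix indexed by $i,j\in\mathbb N_0$ with entry $1$ iff $x_i=x_j$ (i.e. $\rho(\sigma^ix,\sigma^jx)\le1/2$). A line of length $\ell$ in it is $(i,j,\ell)$ with $i\ne j$, entries $(i+k,j+k)=1$ for $0\le k<\ell$, entry $(i-1,j-1)=0$ if $\min\{i,j\}>0$, and entry $(i+\ell,j+\ell)=0$; it is inner if $\min\{i,j\}>0$. $\mathcal K_\ell=\{(i,j)\in\mathbb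 N^2:(i,j,\ell)\text{ is an inner line in }R(x,\infty,1/2)\}$, $\mathbb N$ the positive integers, $[1,n)=\{1,\dots,n-1\}$. *)

(* Letters of A = {0,1} are encoded as bool: 0 = false, 1 = true. *)
From mathcomp Require Import all_boot all_order all_algebra.
Set Implicit Arguments. Unset Strict Implicit. Unset Printing Implicit Defensive.

Definition subst_word (zeta : bool -> seq bool) (w : seq bool) : seq bool :=
  flatten (map zeta w).

Definition subst_iter (zeta : bool -> seq bool) (k : nat) (a : bool) : seq bool :=
  iter k (subst_word zeta) [:: a].

Definition const_length (zeta : bool -> seq bool) (q : nat) : Prop :=
  size (zeta false) = q /\ size (zeta true) = q.

Definition primitive (zeta : bool -> seq bool) : Prop :=
  exists k, forall a b : bool, b \in subst_iter zeta k a.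

Definition in_language (zeta : bool -> seq bool) (w : seq bool) : Prop :=
  exists k a, infix w (subst_iter zeta k a).

Definition in_subshift (zeta : bool -> seq bool) (y : nat -> bool) : Prop :=
  forall m len, in_language zeta (mkseq (fun t => y (m + t)) len).

Definition shift_periodic (y : nat -> bool) : Prop :=
  exists p, 0 < p /\ forall i, y (i + p) = y i.

Definition aperiodic (zeta : bool -> seq bool) : Prop :=
  exists y, in_subshift zeta y /\ ~ shift_periodic y.

(* x is a fixed point of zeta: zeta(x) = x (for constant length q this is
   x_{kq+r} = zeta(x_k)_r). *)
Definition is_fixed_point (zeta : bool -> seq bool) (q : nat) (x : nat -> bool) : Prop :=
  forall i, x i = nth false (zeta (x (i %/ q))) (i %% q).

(* Recurrence plot R(x, oo, 1/2): entry (i,j) is 1 iff x_i = x_j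
   (equivalently rho(sigma^i x, sigma^j x) <= 1/2). *)
Definition rp (x : nat -> bool) (i j : nat) : bool := x i == x j.

Definition is_line (x : nat -> bool) (i j l : nat) : bool :=
  [&& i != j,
      all (fun k => rp x (i + k) (j + k)) (iota 0 l),
      (0 < minn i j) ==> ~~ rp x i.-1 j.-1
    & ~~ rp x (i + l) (j + l)].

Definition in_K (x : nat -> bool) (l i j : nat) : bool :=
  [&& 0 < i, 0 < j & is_line x i j l].

Definition countK (x : nat -> bool) (l n : nat) : nat :=
  \sum_(1 <= i < n) \sum_(1 <= j < n) in_K x l i j.

(* The fixed point x of a primitive aperiodic constant-length substitution is
   linearly recurrent: every factor of length m occurs in every window of
   length K m.  Being non-periodic, it also has bounded repetitions: a factor
   with period d has length less than K (d + 1).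

   Upper bound: if two lines of length l start in the same box of side
   Q ~ l / (2K + 1), they lie on the same diagonal (otherwise their overlap is
   a long factor with a small period) and then coincide, since a line is
   maximal.  Hence there are at most (n / Q + 1)^2 = O((n / l)^2) lines.

   Lower bound: a line (i, j) is the pair of words x_(i-1) .. x_(i+l) and
   x_(j-1) .. x_(j+l); both recur in every window of length W = K (l + 2), and
   any two such recurrences form a line, so there are at least (n / W)^2
   lines. *)

From mathcomp Require Import all_boot all_order all_algebra zify.
From Stdlib Require Import Classical.

Set Implicit Arguments.
Unset Strict Implicit.

Definition linearly_recurrent (K : nat) (x : nat -> bool) : Prop :=
  forall m i j, 0 < m -> exists p, [/\ j <= p, p + m <= j + K * m &
    forall e, e < m -> x (p + e) = x (i + e)].

(* The premise says that the factor [x_i .. x_(i+l+d-1)], of length [l + d],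
   has period [d]. *)
Definition repetition_bounded (K : nat) (x : nat -> bool) : Prop :=
  forall i d l, 0 < d -> (forall k, i <= k -> k < i + l -> x (k + d) = x k) ->
  l + d < K * d.+1.

Lemma occurrence_bound (T : eqType) (y : nat -> T) (L : seq T) :
  exists B, forall s, y s \in L -> exists2 s', s' < B & y s' = y s.
Proof.
elim: L => [|a L [B hB]]; first by exists 0.
case: (classic (exists s, y s = a)) => [[s0 hs0]|hna].
- exists (maxn B s0.+1) => s; rewrite inE => /orP [/eqP ->|/hB [s' hs' <-]].
  + by exists s0 => //; rewrite leq_max ltnSn orbT.
  + by exists s' => //; rewrite leq_max hs'.
- exists B => s; rewrite inE => /orP [/eqP hs|/hB //].
  by case: hna; exists s.
Qed.

Lemma exists_expn_between q m : 1 < q -> 0 < m -> exists t, m <= q ^ t < q * m.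
Proof.
move=> q_gt1 m_gt0.
have [t mt tmin] := ex_minnP (ex_intro (fun t => m <= q ^ t) m (ltnW (ltn_expl m q_gt1))).
exists t; rewrite mt /=.
case: t mt tmin => [|t] mt tmin; first by rewrite expn0; nia.
have : q ^ t < m by rewrite ltnNge; apply/negP => /tmin; lia.
by rewrite expnS ltn_pmul2l //; lia.
Qed.

Section Substitution.

Variables (zeta : bool -> seq bool) (q : nat).
Hypothesis zeta_const : const_length zeta q.

Lemma size_subst_word w : size (subst_word zeta w) = q * size w.
Proof.
case: zeta_const => h0 h1; elim: w => [|a w IH] /=; first by rewrite muln0.
rewrite /subst_word /= size_cat -/(subst_word zeta w) IH.
by case: a; rewrite ?h0 ?h1 mulnS.
Qed.

Lemma size_subst_iter k a : size (subst_iter zeta k a) = q ^ k.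
Proof.
elim: k => [|k IH] //.
by rewrite /subst_iter iterS -/(subst_iter zeta k a) size_subst_word IH expnS.
Qed.

Lemma nth_subst_word w s r : r < q -> s < size w ->
  nth false (subst_word zeta w) (s * q + r) = nth false (zeta (nth false w s)) r.
Proof.
have size_zeta a : size (zeta a) = q by case: zeta_const; case: a.
move=> hr; elim: w s => [|a w IH] [|s] //= hs; rewrite /subst_word /= nth_cat size_zeta.
  by rewrite mul0n add0n hr.
rewrite mulSn -addnA ltnNge leq_addr /= addKn.
exact: IH.
Qed.

End Substitution.

Section FixedPoint.

Variables (zeta : bool -> seq bool) (q : nat) (x : nat -> bool).
Hypotheses (q_gt1 : 1 < q) (zeta_const : const_length zeta q)
  (x_fixed : is_fixed_point zeta q x) (x0 : x 0 = false)
  (zeta_primitive : primitive zeta).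

Let q_gt0 : 0 < q. Proof. exact: ltnW. Qed.

Lemma fixed_pointE s r : r < q -> x (s * q + r) = nth false (zeta (x s)) r.
Proof.
by move=> hr; rewrite x_fixed divnMDl // divn_small // addn0 modnMDl modn_small.
Qed.

Lemma fixed_point_blockE k w r : r < q ^ k ->
  x (w * q ^ k + r) = nth false (subst_iter zeta k (x w)) r.
Proof.
elim: k w r => [|k IH] w r hr.
  by move: hr; rewrite expn0 ltnS leqn0 => /eqP ->; rewrite muln1 addn0.
have hrq : r %/ q < q ^ k by rewrite ltn_divLR // -expnSr.
rewrite /subst_iter iterS -/(subst_iter zeta k (x w)) {2}(divn_eq r q).
rewrite nth_subst_word ?ltn_pmod ?(size_subst_iter zeta_const) // -IH //.
have -> : w * q ^ k.+1 + r = (w * q ^ k + r %/ q) * q + r %% q.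
  by rewrite {1}(divn_eq r q) expnSr mulnDl mulnA addnA.
by rewrite fixed_pointE ?ltn_pmod.
Qed.

Lemma fixed_point_prefixE k r : r < q ^ k -> x r = nth false (subst_iter zeta k false) r.
Proof. by move=> hr; have := fixed_point_blockE 0 hr; rewrite mul0n add0n x0. Qed.

Lemma fixed_point_block2_eq k w s r : x w = x s -> x w.+1 = x s.+1 ->
  r < 2 * q ^ k -> x (w * q ^ k + r) = x (s * q ^ k + r).
Proof.
move=> e0 e1 hr; case: (ltnP r (q ^ k)) => hrQ; first by rewrite !fixed_point_blockE // e0.
have -> : w * q ^ k + r = w.+1 * q ^ k + (r - q ^ k) by rewrite mulSn; lia.
have -> : s * q ^ k + r = s.+1 * q ^ k + (r - q ^ k) by rewrite mulSn; lia.
by rewrite !fixed_point_blockE ?e1 //; lia.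
Qed.

Lemma fixed_point_letter_occurs a : exists t, x t = a.
Proof.
have [k hk] := zeta_primitive.
exists (index a (subst_iter zeta k false)).
rewrite (@fixed_point_prefixE k) ?nth_index //.
by rewrite -(size_subst_iter zeta_const k false) index_mem.
Qed.

Lemma fixed_point_language_occurs w : in_language zeta w ->
  exists p, forall e, e < size w -> nth false w e = x (p + e).
Proof.
move=> [k [a /infixP [s1 [s2 hs]]]].
have [t ht] := fixed_point_letter_occurs a.
exists (t * q ^ k + size s1) => e he.
rewrite -addnA fixed_point_blockE; last first.
  by rewrite -(size_subst_iter zeta_const k (x t)) ht hs !size_cat ltn_add2l ltn_addr.
by rewrite ht hs nth_cat ltnNge leq_addr /= addKn nth_cat he.
Qed.

Lemma fixed_point_not_periodic : aperiodic zeta -> ~ shift_periodic x.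
Proof.
move=> [y [y_sub y_aper] [d [d_gt0 x_per]]]; apply: y_aper; exists d; split => // i.
have [p hp] := fixed_point_language_occurs (y_sub i d.+1).
have := hp 0; have := hp d; rewrite size_mkseq !nth_mkseq // addn0 => -> // -> //.
by rewrite addn0 x_per.
Qed.

(* Every pair of consecutive letters of [x] already occurs below some bound [B].
   By primitivity every aligned block of level [k0] contains the letter 0, hence
   a copy of the prefix of [x] of length [q ^ B], hence the pair. *)
Lemma fixed_point_pair_occurs_in_blocks : exists R, forall v s, exists u,
  [/\ u.+1 < q ^ R, x (v * q ^ R + u) = x s & x (v * q ^ R + u.+1) = x s.+1].
Proof.
have [k0 hk] := zeta_primitive.
have [B hB] := occurrence_bound (fun s => (x s, x s.+1)) (enum {: bool * bool}).
have hBq : B < q ^ B by apply: ltn_expl.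
exists (k0 + B) => v s.
have [s' hs' [e0 e1]] : exists2 s', s' < B & x s' = x s /\ x s'.+1 = x s.+1.
  by have [s' ? [<- <-]] := hB s (mem_enum _ _); exists s'.
pose t0 := index false (subst_iter zeta k0 (x v)).
have ht0 : t0 < q ^ k0.
  by rewrite -(size_subst_iter zeta_const k0 (x v)) index_mem.
have x_t0 : x (v * q ^ k0 + t0) = false by rewrite fixed_point_blockE ?nth_index.
have prefix_at r : r < q ^ B -> x (v * q ^ (k0 + B) + (t0 * q ^ B + r)) = x r.
  move=> hr; rewrite expnD mulnA addnA -mulnDl fixed_point_blockE // x_t0.
  by rewrite -fixed_point_prefixE.
exists (t0 * q ^ B + s'); rewrite -addnS !prefix_at ?e0 ?e1; try lia.
split=> //; rewrite expnD; nia.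
Qed.

(* With [m <= q ^ t], the factor of length [m] at [i] lies in the image under
   [zeta ^ t] of the pair of letters at [s = i %/ q ^ t]; that pair recurs in
   every aligned block of length [q ^ R], hence in every window of length
   [2 q ^ R q ^ t]. *)
Lemma fixed_point_linearly_recurrent : exists K, 0 < K /\ linearly_recurrent K x.
Proof.
have [R hR] := fixed_point_pair_occurs_in_blocks.
have A_gt0 : 0 < q ^ R by rewrite expn_gt0 q_gt0.
exists (2 * (q ^ R * q)); split=> [|m i j m_gt0]; first by rewrite !muln_gt0 A_gt0 q_gt0.
have [t /andP [mQ Qm]] := exists_expn_between q_gt1 m_gt0.
set Q := q ^ t in mQ Qm *.
have Q_gt0 : 0 < Q by rewrite expn_gt0 q_gt0.
set V := q ^ R * Q.
have V_gt0 : 0 < V by rewrite muln_gt0 A_gt0.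
pose v := (j + V.-1) %/ V.
have [hv1 hv2] : j <= v * V /\ v * V < j + V.
  by have := divn_eq (j + V.-1) V; have := ltn_pmod (j + V.-1) V_gt0; lia.
have [u [u_lt xu0 xu1]] := hR v (i %/ Q).
set w := v * q ^ R + u in xu0 xu1.
exists (w * Q + i %% Q); split.
- have : v * V <= w * Q by rewrite /V mulnA leq_mul2r leq_addr orbT.
  lia.
- have : (w + 2) * Q <= (v + 1) * V by rewrite /V mulnA leq_mul2r /w mulnDl mul1n; lia.
  have : V < q ^ R * q * m by rewrite /V -mulnA ltn_mul2l A_gt0.
  have := ltn_pmod i Q_gt0; nia.
- move=> e e_lt; rewrite -addnA (fixed_point_block2_eq (s := i %/ Q)) //.
  + by rewrite addnA -divn_eq.
  + by rewrite /w -addnS.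
  + by have := ltn_pmod i Q_gt0; lia.
Qed.

End FixedPoint.

Lemma linearly_recurrent_repetition_bounded K x :
  linearly_recurrent K x -> ~ shift_periodic x -> repetition_bounded K x.
Proof.
move=> x_rec x_aper i d l d_gt0 x_per; rewrite ltnNge; apply/negP => long.
apply: x_aper; exists d; split=> // a.
have [p [p_ge p_le hp]] := x_rec d.+1 a i (ltn0Sn d).
have := hp 0 (ltn0Sn d); have := hp d (ltnSn d); rewrite !addn0 => <- <-.
by rewrite x_per //; lia.
Qed.

Section Lines.

Variable x : nat -> bool.

Lemma in_KP l i j : reflect
  [/\ 0 < i, 0 < j, forall k, k < l -> x (i + k) = x (j + k),
      x i.-1 <> x j.-1 & x (i + l) <> x (j + l)]
  (in_K x l i j).
Proof.
rewrite /in_K /is_line /rp; apply: (iffP idP).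
- move=> /and3P [i_gt0 j_gt0 /and4P [_ /allP eq_l neq_i neq_l]]; split=> //.
  + by move=> k k_lt; apply/eqP/eq_l; rewrite mem_iota.
  + by move: neq_i; rewrite leq_min i_gt0 j_gt0 => /eqP.
  + exact/eqP.
- move=> [i_gt0 j_gt0 eq_l neq_i neq_l]; rewrite i_gt0 j_gt0 /=; apply/and4P; split.
  + by apply/eqP => ij; apply: neq_i; rewrite ij.
  + by apply/allP => k; rewrite mem_iota add0n => /eq_l ->.
  + by apply/implyP => _; apply/eqP.
  + exact/eqP.
Qed.

Lemma in_K_sym l i j : in_K x l i j = in_K x l j i.
Proof.
by apply/in_KP/in_KP => -[? ? eq_l ? ?]; split=> // [k /eq_l -> //||]; apply: nesym.
Qed.

Lemma countK_card l n : countK x l n = #|[set p : 'I_n * 'I_n | in_K x l p.1 p.2]|.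
Proof.
have from1 F : F 0 = 0 -> \sum_(1 <= i < n) F i = \sum_(i < n) F i.
  case: n => [|n] F0; first by rewrite big_geq // big_ord0.
  by rewrite -(big_mkord xpredT) [RHS]big_ltn // F0 add0n.
rewrite /countK (eq_bigr _ (fun i _ => from1 _ _)); last by move=> i _; rewrite /in_K andbC.
rewrite from1; last by rewrite big1.
rewrite pair_bigA -sum1_card [RHS]big_mkcond.
by apply: eq_bigr => p _; rewrite inE; case: in_K.
Qed.

Lemma countK_le l n : countK x l n <= n ^ 2.
Proof.
rewrite countK_card; apply: leq_trans (max_card _) _.
by rewrite card_prod card_ord mulnn.
Qed.

Lemma countK_gt0 l n : 0 < countK x l n -> exists i j, [/\ i < n, j < n & in_K x l i j].
Proof.
rewrite countK_card card_gt0 => /set0Pn [[i j]]; rewrite inE /= => L.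
by exists i, j.
Qed.

Lemma in_K_same_diagonal l i j i' j' : in_K x l i j -> in_K x l i' j' ->
  i < i' -> i' < i + l -> i + j' = i' + j -> False.
Proof.
move=> /in_KP [_ _ eq_l _ _] /in_KP [i'_gt0 _ _ neq_i' _] ii' i'l diag.
apply: neq_i'.
rewrite (_ : i'.-1 = i + (i'.-1 - i)); last lia.
rewrite (_ : j'.-1 = j + (i'.-1 - i)); last lia.
by apply: eq_l; lia.
Qed.

Lemma in_K_copy l i j p p' : in_K x l i j ->
  (forall e, e < l.+2 -> x (p + e) = x (i.-1 + e)) ->
  (forall e, e < l.+2 -> x (p' + e) = x (j.-1 + e)) -> in_K x l p.+1 p'.+1.
Proof.
move=> /in_KP [i_gt0 j_gt0 eq_l neq_i neq_l] copy_i copy_j.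
have shift k : k <= l -> x (p.+1 + k) = x (i + k) /\ x (p'.+1 + k) = x (j + k).
  move=> kl; rewrite !addSnnS copy_i ?copy_j ?ltnS //; split; congr x; lia.
apply/in_KP; split=> //.
- by move=> k kl; have [-> ->] := shift k (ltnW kl); exact: eq_l.
- by rewrite /= -[p]addn0 -[p']addn0 copy_i ?copy_j ?addn0.
- by have [-> ->] := shift l (leqnn l).
Qed.

Section RepetitionBounded.

Variable K : nat.
Hypothesis x_rep : repetition_bounded K x.

Lemma in_K_offset_lt l i j : in_K x l i j -> i < j -> l + (j - i) < K * (j - i).+1.
Proof.
move=> /in_KP [_ _ eq_l _ _] ij; apply: (@x_rep i); first by rewrite subn_gt0.
move=> k ik kl; rewrite (_ : k + (j - i) = j + (k - i)); last lia.
rewrite -eq_l; last lia.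
by congr x; lia.
Qed.

Lemma in_K_length_lt l i j n : in_K x l i j -> i < n -> j < n -> l < K * n.
Proof.
wlog ij : i j / i < j => [hwlog L ilt jlt|L _ jlt].
  case: (ltngtP i j) => [ij|ji|ij]; first exact: hwlog L ilt jlt.
    by rewrite in_K_sym in L; exact: hwlog L jlt ilt.
  by case/in_KP: L => _ _ _ []; rewrite ij.
have := in_K_offset_lt L ij.
have : K * (j - i).+1 <= K * n by apply: leq_mul => //; lia.
lia.
Qed.

(* On two diagonals at distance [e > 0] the two lines overlap in a factor of
   period [e] and length about [l], which a repetition bound forbids. *)
Lemma in_K_close_diagonals Q l i j i' j' : (2 * K + 1) * Q <= l ->
  in_K x l i j -> in_K x l i' j' ->
  i < i' + Q -> i' < i + Q -> j < j' + Q -> j' < j + Q -> j + i' < j' + i -> False.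
Proof.
move=> long /in_KP [_ _ eq_l _ _] /in_KP [_ _ eq_l' _ _] ii' i'i jj' j'j diag.
pose a := maxn i i'; pose e := j' + i - j - i'.
have Ql : Q <= l by nia.
have : l - Q + e < K * e.+1.
  apply: (@x_rep (a - i + j)) => [|k ka kl]; first by rewrite /e; lia.
  rewrite (_ : k + e = j' + (k + i - j - i')); last by rewrite /e; lia.
  rewrite -eq_l'; last by rewrite /a /e in ka kl *; lia.
  rewrite (_ : i' + (k + i - j - i') = i + (k - j)); last by rewrite /a /e in ka kl *; lia.
  rewrite eq_l; last by rewrite /a in ka kl *; lia.
  by congr x; rewrite /a in ka *; lia.
have : e.+1 <= 2 * Q by rewrite /e; lia.
nia.
Qed.

Lemma in_K_block_inj Q l i j i' j' : 0 < Q -> (2 * K + 1) * Q <= l ->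
  in_K x l i j -> in_K x l i' j' ->
  i %/ Q = i' %/ Q -> j %/ Q = j' %/ Q -> i = i' /\ j = j'.
Proof.
move=> Q_gt0 long L L' ei ej.
have near a b : a %/ Q = b %/ Q -> a < b + Q.
  by move=> eab; rewrite (divn_eq a Q) (divn_eq b Q) eab; have := ltn_pmod a Q_gt0; lia.
have Ql : Q <= l by nia.
case: (ltngtP (j + i') (j' + i)) => diag.
- by case: (in_K_close_diagonals long L L'); auto.
- by case: (in_K_close_diagonals long L' L); auto; lia.
- case: (ltngtP i i') => ii'.
  + by case: (in_K_same_diagonal L L' ii'); [have := near _ _ ei; lia | lia].
  + by case: (in_K_same_diagonal L' L ii'); [have := near _ _ (esym ei); lia | lia].
  + by split => //; lia.
Qed.

Lemma countK_le_blocks Q l n : 0 < Q -> (2 * K + 1) * Q <= l ->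
  countK x l n <= (n %/ Q).+1 ^ 2.
Proof.
move=> Q_gt0 long; rewrite countK_card.
pose block (a : 'I_n) : 'I_(n %/ Q).+1 := inord (a %/ Q).
have block_lt (a : 'I_n) : a %/ Q < (n %/ Q).+1 by rewrite ltnS leq_div2r // ltnW.
have block_inj : {in [set p : 'I_n * 'I_n | in_K x l p.1 p.2] &,
    injective (fun p => (block p.1, block p.2))}.
  move=> [a b] [a' b']; rewrite !inE /= => L L' [/(congr1 val) ea /(congr1 val) eb].
  rewrite /= !inordK // in ea eb.
  by have [/val_inj -> /val_inj ->] := in_K_block_inj Q_gt0 long L L' ea eb.
rewrite -(card_in_imset block_inj); apply: leq_trans (max_card _) _.
by rewrite card_prod card_ord mulnn.
Qed.

Lemma countK_upper l n : 0 < l -> 2 <= n -> 0 < countK x l n ->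
  countK x l n * l ^ 2 <= 2 * (5 * K + 2) ^ 2 * (n ^ 2 - n).
Proof.
move=> l_gt0 n_ge2 /countK_gt0 [i [j [ilt jlt L]]].
have lKn := in_K_length_lt L ilt jlt.
have sq_bound : n ^ 2 <= 2 * (n ^ 2 - n) by rewrite -mulnn; nia.
apply: leq_trans (_ : ((5 * K + 2) * n) ^ 2 <= _); last first.
  by rewrite expnMn -mulnA mulnCA leq_mul2l sq_bound orbT.
case: (ltnP l (2 * K + 1)) => lG.
  rewrite expnMn mulnC; apply: leq_mul; last exact: countK_le.
  by rewrite leq_exp2r //; lia.
pose Q := l %/ (2 * K + 1).
have Q_gt0 : 0 < Q by rewrite divn_gt0 // addn1.
have long : (2 * K + 1) * Q <= l by rewrite mulnC leq_trunc_div.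
have l_lt : l < (2 * K + 1) * Q.+1 by rewrite mulnC ltn_ceil // addn1.
have nQ : n %/ Q * Q <= n by rewrite leq_trunc_div.
have blocks : (n %/ Q).+1 * l <= (5 * K + 2) * n.
  have : n %/ Q * l <= n %/ Q * (2 * (2 * K + 1) * Q) by rewrite leq_mul2l; nia.
  nia.
apply: leq_trans (_ : ((n %/ Q).+1 * l) ^ 2 <= _); last by rewrite leq_exp2r.
by rewrite expnMn leq_mul2r (countK_le_blocks n Q_gt0 long) orbT.
Qed.

End RepetitionBounded.

Section LinearlyRecurrent.

Variable K : nat.
Hypothesis x_rec : linearly_recurrent K x.

(* Both words around a line recur in every window of length [W], and each
   pair of recurrences is a line whose endpoints lie in the two windows. *)
Lemma countK_ge_windows l n i j : in_K x l i j -> (n %/ (K * l.+2)) ^ 2 <= countK x l n.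
Proof.
move=> L; rewrite countK_card; set W := K * l.+2.
case hN : (n %/ W) => [|N] //.
case: n hN => [|n] hN; first by rewrite div0n in hN.
have W_gt0 : 0 < W by rewrite lt0n; apply/eqP => W0; rewrite W0 divn0 in hN.
have w_bound (w : 'I_N.+1) p : p + l.+2 <= w * W + W -> p.+1 < n.+1.
  move=> pl; have := leq_trunc_div n.+1 W; rewrite hN.
  have : w.+1 * W <= N.+1 * W by rewrite leq_mul2r ltn_ord orbT.
  rewrite mulSn; lia.
pose window (a : 'I_n.+1) : 'I_N.+1 := inord (a %/ W).
have in_window (w : 'I_N.+1) p : w * W <= p -> p + l.+2 <= w * W + W ->
    window (inord p.+1) = w.
  move=> ge le; apply/val_inj; rewrite /window /= (inordK (w_bound w p le)) inordK.
    by apply/eqP; rewrite eqn_leq -ltnS ltn_divLR // leq_divRL //; apply/andP; split; nia.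
  by rewrite ltn_divLR //; have := ltn_ord w; nia.
apply: leq_trans (_ : #|[set: 'I_N.+1 * 'I_N.+1]| <= _).
  by rewrite cardsT card_prod card_ord mulnn.
apply: leq_trans (leq_imset_card (fun p => (window p.1, window p.2)) _).
apply: subset_leq_card; apply/subsetP => -[w1 w2] _.
have [p1 [p1_ge p1_le copy1]] := @x_rec l.+2 i.-1 (w1 * W) (ltn0Sn _).
have [p2 [p2_ge p2_le copy2]] := @x_rec l.+2 j.-1 (w2 * W) (ltn0Sn _).
apply/imsetP; exists (inord p1.+1, inord p2.+1).
  rewrite inE /= !inordK ?(w_bound w1 p1) ?(w_bound w2 p2) //.
  exact: in_K_copy L copy1 copy2.
by rewrite /= (in_window w1 p1) ?(in_window w2 p2).
Qed.

Lemma countK_lower l n : 0 < K -> 0 < l -> 0 < countK x l n ->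
  n ^ 2 - n <= 36 * K ^ 2 * l ^ 2 * countK x l n.
Proof.
move=> K_gt0 l_gt0 /[dup] cnt_gt0 /countK_gt0 [i [j [_ _ L]]].
have := countK_ge_windows n L; set W := K * l.+2; set N := n %/ W => windows.
have W_gt0 : 0 < W by rewrite muln_gt0 K_gt0.
have N_sq : N.+1 ^ 2 <= 4 * countK x l n.
  case: (posnP N) => [->|N_gt0]; first by rewrite exp1n; lia.
  apply: leq_trans (_ : (2 * N) ^ 2 <= _); first by rewrite leq_exp2r //; lia.
  by rewrite expnMn leq_mul2l windows orbT.
have W_sq : W ^ 2 <= (3 * K * l) ^ 2 by rewrite leq_exp2r // /W; nia.
have n_sq : n ^ 2 <= (N.+1 * W) ^ 2 by rewrite leq_exp2r // ltnW // ltn_ceil.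
apply: leq_trans (leq_subr _ _) _; apply: (leq_trans n_sq).
apply: leq_trans (_ : 4 * countK x l n * (3 * K * l) ^ 2 <= _).
  by rewrite expnMn leq_mul.
by rewrite !expnMn; lia.
Qed.

End LinearlyRecurrent.

End Lines.

Unset Implicit Arguments.

Import Order.TTheory GRing.Theory Num.Theory.
Local Open Scope ring_scope.

Lemma ler_ratio_nat (R : realFieldType) (a b c d : nat) : (0 < b)%N -> (0 < d)%N ->
  (a%:R / b%:R <= c%:R / d%:R :> R) = (a * d <= c * b)%N.
Proof.
move=> b_gt0 d_gt0.
by rewrite ler_pdivlMr ?ltr0n // mulrAC ler_pdivrMr ?ltr0n // -!natrM ler_nat.
Qed.

Theorem lemma3p1 (R : realFieldType) (zeta : bool -> seq bool) (q : nat)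
  (x : nat -> bool) :
  (2 <= q)%N -> const_length zeta q -> primitive zeta -> aperiodic zeta ->
  nth true (zeta false) 0%N = false ->
  is_fixed_point zeta q x -> x 0%N = false ->
  exists c0 c : R, [/\ 0 < c0, c0 <= 1, 1 <= c &
    forall l n : nat, (1 <= l)%N -> (2 <= n)%N -> (0 < countK x l n)%N ->
      c0 / (l%:R ^+ 2) <= (countK x l n)%:R / (n%:R ^+ 2 - n%:R) /\
      (countK x l n)%:R / (n%:R ^+ 2 - n%:R) <= c / (l%:R ^+ 2)].
Proof.
move=> q_ge2 zeta_const zeta_prim zeta_aper _ x_fixed x0.
have [K [K_gt0 x_rec]] := fixed_point_linearly_recurrent q_ge2 zeta_const x_fixed x0 zeta_prim.
have x_rep := linearly_recurrent_repetition_bounded x_rec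
  (fixed_point_not_periodic q_ge2 zeta_const x_fixed x0 zeta_prim zeta_aper).
have M_gt0 : (0 < 36 * K ^ 2)%N by rewrite muln_gt0 expn_gt0 K_gt0.
exists (36 * K ^ 2)%:R^-1, (2 * (5 * K + 2) ^ 2)%:R; split.
- by rewrite invr_gt0 ltr0n.
- by rewrite invf_le1 ?ltr0n // ler1n.
- by rewrite ler1n muln_gt0 expn_gt0 addn_gt0 orbT.
move=> l n l_gt0 n_ge2 cnt_gt0.
have -> : n%:R ^+ 2 - n%:R = (n ^ 2 - n)%:R :> R by rewrite natrB ?natrX //; nia.
have nn_gt0 : (0 < n ^ 2 - n)%N by nia.
have l2_gt0 : (0 < l ^ 2)%N by rewrite expn_gt0 l_gt0.
have Ml2_gt0 : (0 < 36 * K ^ 2 * l ^ 2)%N by rewrite muln_gt0 M_gt0.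
rewrite -natrX -[_^-1]mul1r -mulrA -invfM -natrM; split.
- rewrite (ler_ratio_nat _ 1) //.
  by have := countK_lower x_rec K_gt0 l_gt0 cnt_gt0; lia.
- by rewrite ler_ratio_nat //; exact: countK_upper.
Qed.
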